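(* Consider the queue rule with budget $B$, winner endowments $w$ and ranking scores $r$. Fix a winner $i$ whose score is unique, i.e. $r_i\ne r_j$ for all $j\ne i$. Suppose winner $i$ is split into subaccounts with endowments $z_1,\dots,z_m>0$, $\sum_{a=1}^mz_a=w_i$, each child keeping the parent's score $r_i$, while all other winners are unchanged. Let $x_i(B)$ be the seizure from $i$ in the unsplit instance, and $\tilde x_a(B)$ the seizure from child $a$ in the split instance. Then \[\sum_{a=1}^m\tilde x_a(B)=x_i(B),\] i.e. the queue rule is Sybil resistant for such splits.
   Context: Winners $j$ have haircutable endowments $w_j>0$ and ranking scores $r_j\in\mathbb{R}$. The (wealth-space) queue rule with budget $B\ge0$ works as follows: - It processes winners in decreasing order of score. - Each processed winner $j$ has $x_j=\min\{w_j,\text{remaining budget}\}$ seized. - The seized amount is then subtracted from the remaining budget, which starts at $B$. - Ties in score may be processed in any order. *)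

From HB Require Import structures.
From mathcomp Require Import all_boot all_order all_algebra.
Set Implicit Arguments. Unset Strict Implicit. Unset Printing Implicit Defensive.
Import Order.TTheory GRing.Theory Num.Theory.
Local Open Scope ring_scope.

(* A processing order is a sequence [s] listing
   every winner exactly once, in weakly decreasing order of score (ties may be
   broken arbitrarily, i.e. any such [s] is admissible). *)
Definition valid_order (R : realDomainType) (I : finType) (r : I -> R)
    (s : seq I) : bool :=
  perm_eq s (enum I) && sorted (fun a b => r b <= r a) s.

Fixpoint queue_alloc (R : realDomainType) (I : eqType) (s : seq I)
    (w : I -> R) (B : R) : I -> R :=
  match s with
  | [::] => fun _ => 0
  | j :: s' =>
      let xj := Num.min (w j) B in
      fun k => if k == j then xj else queue_alloc s' w (B - xj) k
  end.

Definition split_index (I : finType) (i : I) (m : nat) : finType :=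
  ({j : I | j != i} + 'I_m)%type.

Definition split_w (R : realDomainType) (I : finType) (i : I) (m : nat)
    (w : I -> R) (z : 'I_m -> R) : split_index i m -> R :=
  fun k => match k with inl j => w (val j) | inr a => z a end.

Definition split_r (R : realDomainType) (I : finType) (i : I) (m : nat)
    (r : I -> R) : split_index i m -> R :=
  fun k => match k with inl j => r (val j) | inr _ => r i end.

Arguments split_w {R I} i m w z _.
Arguments split_r {R I} i m r _.

From HB Require Import structures.
From mathcomp Require Import all_boot all_order all_algebra.
From mathcomp Require Import lra.
Set Implicit Arguments. Unset Strict Implicit. Unset Printing Implicit Defensive.
Import Order.TTheory GRing.Theory Num.Theory.
Local Open Scope ring_scope.

(* In a valid order the winners with score [c] form a contiguous block,
   preceded exactly by the winners of higher score.  When the block is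
   reached the remaining budget is [max (B - W_>c) 0], and since the queue
   seizes greedily, the block as a whole loses [min (W_c, max (B - W_>c) 0)],
   where [W_>c] and [W_c] are the total endowments above and at score [c].
   This depends on the block only through [W_c]; splitting the unique winner
   of score [r i] into children of total endowment [w i] changes neither
   [W_c] nor [W_>c]. *)

Lemma sorted_filter_cat (T : eqType) (e : rel T) (P : pred T) (s : seq T) :
  transitive e -> (forall a b, e a b -> P b -> P a) -> sorted e s ->
  s = filter P s ++ filter (predC P) s.
Proof.
move=> e_trans P_up; elim: s => //= x s IHs x_s.
case: ifP => Px /=; first by rewrite -IHs ?(path_sorted x_s).
have notP_s : all (predC P) s.
  apply/allP => k ks /=; apply: contraFN Px.
  exact/P_up/(allP (order_path_min e_trans x_s)).
rewrite (all_filterP notP_s) (@eq_in_filter _ _ pred0) ?filter_pred0 //.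
by move=> k /(allP notP_s) /negbTE.
Qed.

Fixpoint queue_budget {R : realDomainType} {T : eqType} (w : T -> R)
    (s : seq T) (B : R) : R :=
  if s is j :: s' then queue_budget w s' (B - Num.min (w j) B) else B.

Section Queue.
Variables (R : realDomainType) (T : eqType) (w : T -> R).
Hypothesis w_ge0 : forall k, 0 <= w k.

Lemma queue_alloc_cat s1 s2 B k :
  queue_alloc (s1 ++ s2) w B k =
  if k \in s1 then queue_alloc s1 w B k
  else queue_alloc s2 w (queue_budget w s1 B) k.
Proof. by elim: s1 B => [|j s1 IHs] B //=; rewrite in_cons; case: eqP. Qed.

Lemma queue_budgetE s B :
  0 <= B -> queue_budget w s B = Num.max (B - \sum_(k <- s) w k) 0.
Proof.
elim: s B => [|j s IHs] B B_ge0 /=; first by rewrite big_nil subr0 max_l.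
have wj_ge0 := w_ge0 j; have sum_ge0 : 0 <= \sum_(k <- s) w k by rewrite sumr_ge0.
rewrite big_cons IHs; last by rewrite subr_ge0 ge_min lexx orbT.
rewrite !maxEle minEle; case: (leP (w j) B) => ?; repeat case: leP => ?; lra.
Qed.

Lemma sum_queue_alloc s B :
  0 <= B -> uniq s ->
  \sum_(k <- s) queue_alloc s w B k = Num.min (\sum_(k <- s) w k) B.
Proof.
elim: s B => [|j s IHs] B B_ge0 /=; first by rewrite !big_nil min_l.
case/andP=> j_notin_s s_uniq; rewrite !big_cons eqxx.
rewrite (eq_big_seq (queue_alloc s w (B - Num.min (w j) B))); last first.
  by move=> k ks; case: eqP ks j_notin_s => // ->->.
have wj_ge0 := w_ge0 j; have sum_ge0 : 0 <= \sum_(k <- s) w k by rewrite sumr_ge0.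
rewrite IHs //; last by rewrite subr_ge0 ge_min lexx orbT.
rewrite !minEle; case: (leP (w j) B) => ?; repeat case: leP => ?; lra.
Qed.

End Queue.

Section ValidOrder.
Variables (R : realDomainType) (I : finType) (r w : I -> R).
Hypothesis w_ge0 : forall k, 0 <= w k.

Lemma valid_order_big (s : seq I) (P : pred I) (F : I -> R) :
  valid_order r s -> \sum_(k <- filter P s) F k = \sum_(k | P k) F k.
Proof.
by case/andP=> s_perm _; rewrite big_filter (perm_big _ s_perm) big_enum_cond.
Qed.

Lemma sorted_score_split (s : seq I) c :
  sorted (fun a b => r b <= r a) s ->
  s = [seq k <- s | c < r k] ++ [seq k <- s | r k == c] ++ [seq k <- s | r k < c].
Proof.
move=> s_sorted; have ge_trans : transitive (fun a b => r b <= r a).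
  by move=> y x z /= xy yz; apply: le_trans xy.
set rest := filter (predC (fun k => c < r k)) s.
have s_above : s = [seq k <- s | c < r k] ++ rest.
  by apply: sorted_filter_cat ge_trans _ s_sorted => a b /= ba /lt_le_trans; apply.
have rest_sorted : sorted (fun a b => r b <= r a) rest by exact: sorted_filter.
rewrite {1}s_above; congr (_ ++ _).
rewrite (@sorted_filter_cat _ _ (fun k => c <= r k) _ ge_trans _ rest_sorted);
  last by move=> a b /= ba /le_trans; apply.
rewrite -!filter_predI; congr (_ ++ _); apply: eq_filter => k /=.
  by rewrite -leNgt eq_le andbC.
by rewrite -!ltNge; case: ltgtP.
Qed.

Lemma valid_order_level_alloc (s : seq I) B c :
  0 <= B -> valid_order r s ->
  \sum_(k | r k == c) queue_alloc s w B k =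
  Num.min (\sum_(k | r k == c) w k)
          (Num.max (B - \sum_(k | c < r k) w k) 0).
Proof.
move=> B_ge0 s_valid; have /andP[s_perm s_sorted] := s_valid.
have s_split := sorted_score_split c s_sorted.
set above := filter _ s in s_split; set level := filter _ s in s_split.
rewrite -!(valid_order_big _ _ s_valid) -/above -/level.
rewrite (eq_big_seq (queue_alloc level w (queue_budget w above B))); last first.
  move=> k k_level; rewrite s_split queue_alloc_cat queue_alloc_cat k_level.
  by move: k_level; rewrite !mem_filter => /andP[/eqP-> _]; rewrite ltxx.
rewrite sum_queue_alloc ?queue_budgetE ?le_max ?lexx ?orbT //.
by rewrite filter_uniq // (perm_uniq s_perm) enum_uniq.
Qed.

End ValidOrder.

Section Split.
Variables (R : realDomainType) (I : finType) (r : I -> R) (i : I) (m : nat).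
Hypothesis r_unique : forall j, j != i -> r j != r i.

Lemma big_level_unique (F : I -> R) : \sum_(j | r j == r i) F j = F i.
Proof.
rewrite (big_pred1 i) // => j /=.
by case: (eqVneq j i) => [->|/r_unique/negbTE]; rewrite ?eqxx.
Qed.

Lemma big_split_level (F : split_index i m -> R) :
  \sum_(k | split_r i m r k == r i) F k = \sum_(a < m) F (inr a).
Proof.
rewrite big_sumType /= big_pred0 ?add0r => [|j]; first by apply: eq_bigl => a; rewrite eqxx.
exact/negbTE/r_unique/(valP j).
Qed.

Lemma big_split_above (w : I -> R) (z : 'I_m -> R) :
  \sum_(k | r i < split_r i m r k) split_w i m w z k = \sum_(j | r i < r j) w j.
Proof.
rewrite big_sumType /= ltxx big_pred0_eq addr0.
rewrite -(big_sub_cond (fun j => j != i) (fun j => r i < r j) w).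
by apply: eq_bigl => j; rewrite unfold_in; case: eqVneq => [->|]; rewrite ?ltxx.
Qed.

End Split.

Theorem mainTheorem5 (R : realFieldType) (I : finType) (w r : I -> R) (B : R)
    (i : I) (m : nat) (z : 'I_m -> R) :
  0 <= B ->
  (forall j, 0 < w j) ->
  (forall j, j != i -> r j != r i) ->
  (forall a, 0 < z a) ->
  \sum_(a < m) z a = w i ->
  forall (s : seq I) (s' : seq (split_index i m)),
  valid_order r s ->
  valid_order (split_r i m r) s' ->
  \sum_(a < m) queue_alloc s' (split_w i m w z) B (inr a) = queue_alloc s w B i.
Proof.
move=> B_ge0 w_gt0 r_unique z_gt0 z_sum s s' s_valid s'_valid.
have w_ge0 j : 0 <= w j by apply: ltW.
have split_w_ge0 k : 0 <= split_w i m w z k.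
  by case: k => [j|a]; apply: ltW; [apply: w_gt0 | apply: z_gt0].
rewrite -(big_split_level r_unique) -(big_level_unique r_unique (queue_alloc s w B)).
rewrite !valid_order_level_alloc // big_split_above.
by rewrite (big_split_level r_unique) (big_level_unique r_unique) -z_sum.
Qed.
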